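(* Assume $F$ is $K$-smooth with $\ell\in\mathrm{int}(K)$ and strongly $K$-convex with $\mu\in\mathrm{int}(K)$. Let $C_\ell:=\{c^*\in K^*:\langle c^*,\ell\rangle=1\}$ and let $\{x^k\}$ be generated from $x^0$ by $$x^{k+1}:=\arg\min_{x\in\mathbb{R}^n}\max_{c^*\in C_\ell}\langle c^*,JF(x^k)(x-x^k)\rangle+\tfrac12\|x-x^k\|^2,$$ assumed not to terminate ($x^{k+1}\ne x^k$ for all $k$). Then: (i) $\{x^k\}$ converges to an efficient solution $x^*$ of $\min_K F(x)$; (ii) $\|x^{k+1}-x^*\|\le\sqrt{1-1/\kappa_{F,\preceq_K}}\,\|x^k-x^*\|$ for all $k\ge0$, where $\kappa_{F,\preceq_K}:=\max_{c^*\in K^*\setminus\{0\}}\frac{\langle c^*,\ell\rangle}{\langle c^*,\mu\rangle}$.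
   Context: $K\subset\mathbb{R}^m$ closed convex pointed cone with nonempty interior; $y\preceq_K y'$ iff $y'-y\in K$. $K^*=\{c:\langle c,y\rangle\ge0\ \forall y\in K\}$. $F:\mathbb{R}^n\to\mathbb{R}^m$ differentiable with Jacobian $JF$. Strongly $K$-convex with $\mu\in K$: $JF(x)(y-x)+\tfrac12\|y-x\|^2\mu\preceq_K F(y)-F(x)$ $\forall x,y$. $K$-smooth with $\ell\in K$: $F(y)-F(x)\preceq_K JF(x)(y-x)+\tfrac12\|y-x\|^2\ell$ $\forall x,y$. $x^*$ is efficient if there is no $x$ with $F(x)\preceq_K F(x^* )$ and $F(x)\neq F(x^* )$. *)

From HB Require Import structures.
From mathcomp Require Import all_boot all_order all_algebra.
From mathcomp Require Import all_classical all_reals all_analysis.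
Set Implicit Arguments. Unset Strict Implicit. Unset Printing Implicit Defensive.
Import Order.TTheory GRing.Theory Num.Theory.
Import numFieldNormedType.Exports.
Local Open Scope classical_set_scope.
Local Open Scope ring_scope.

Section Defs.
Variable R : realType.

Definition dotv (k : nat) (u v : 'rV[R]_k) : R := \sum_(i < k) u ord0 i * v ord0 i.
Definition enorm (k : nat) (u : 'rV[R]_k) : R := Num.sqrt (dotv u u).

Definition is_cone (m : nat) (K : set 'rV[R]_m) : Prop :=
  forall y t, K y -> 0 <= t -> K (t *: y).
Definition is_convex_set (m : nat) (K : set 'rV[R]_m) : Prop :=
  forall x y t, K x -> K y -> 0 <= t <= 1 -> K (t *: x + (1 - t) *: y).
Definition is_pointed (m : nat) (K : set 'rV[R]_m) : Prop :=
  forall y, K y -> K (- y) -> y = 0.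

Definition coneLe (m : nat) (K : set 'rV[R]_m) (y y' : 'rV[R]_m) : Prop := K (y' - y).

Definition dual_cone (m : nat) (K : set 'rV[R]_m) : set 'rV[R]_m :=
  [set c | forall y, K y -> 0 <= dotv c y].

Definition Jac (n m : nat) (F : 'rV[R]_n -> 'rV[R]_m) (x v : 'rV[R]_n) : 'rV[R]_m :=
  'd F x v.

Definition strongly_K_convex (n m : nat) (K : set 'rV[R]_m)
  (F : 'rV[R]_n -> 'rV[R]_m) (mu : 'rV[R]_m) : Prop :=
  forall x y, coneLe K (Jac F x (y - x) + (2^-1 * enorm (y - x) ^+ 2) *: mu) (F y - F x).

Definition K_smooth (n m : nat) (K : set 'rV[R]_m)
  (F : 'rV[R]_n -> 'rV[R]_m) (ell : 'rV[R]_m) : Prop :=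
  forall x y, coneLe K (F y - F x) (Jac F x (y - x) + (2^-1 * enorm (y - x) ^+ 2) *: ell).

Definition efficient (n m : nat) (K : set 'rV[R]_m)
  (F : 'rV[R]_n -> 'rV[R]_m) (xs : 'rV[R]_n) : Prop :=
  ~ exists x, coneLe K (F x) (F xs) /\ F x <> F xs.

Definition C_ell (m : nat) (K : set 'rV[R]_m) (ell : 'rV[R]_m) : set 'rV[R]_m :=
  [set c | dual_cone K c /\ dotv c ell = 1].

(* subproblem objective: max_{c in C_ell} <c, JF(xk)(x - xk)> + 1/2 |x - xk|^2
   (the max is attained, so it is written as a sup) *)
Definition subprob_obj (n m : nat) (K : set 'rV[R]_m) (ell : 'rV[R]_m)
  (F : 'rV[R]_n -> 'rV[R]_m) (xk x : 'rV[R]_n) : R :=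
  sup [set dotv c (Jac F xk (x - xk)) | c in C_ell K ell]
  + 2^-1 * enorm (x - xk) ^+ 2.

Definition is_argmin (n : nat) (f : 'rV[R]_n -> R) (z : 'rV[R]_n) : Prop :=
  forall x, f z <= f x.

(* kappa = max_{c in K^* \ {0}} <c,ell>/<c,mu> (attained; written as a sup) *)
Definition kappa (m : nat) (K : set 'rV[R]_m) (ell mu : 'rV[R]_m) : R :=
  sup [set dotv c ell / dotv c mu | c in dual_cone K `\ 0].

End Defs.

From HB Require Import structures.
From mathcomp Require Import all_boot all_order all_algebra.
From mathcomp Require Import all_classical all_reals all_analysis.
From mathcomp Require Import ring lra.
Set Implicit Arguments. Unset Strict Implicit. Unset Printing Implicit Defensive.
Import Order.TTheory GRing.Theory Num.Theory.
Import numFieldNormedType.Exports.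
Local Open Scope classical_set_scope.
Local Open Scope ring_scope.

(* Scalarizing with [c] in [C_ell], K-smoothness makes every step decrease each
   [<c, F(.)>], while the subproblem, being 1-strongly convex, grows quadratically
   around its minimizer. Combined with strong K-convexity and [<c, mu> >= 1/kappa],
   this gives [|x_(k+1) - y|^2 <= (1 - 1/kappa) |x_k - y|^2] for every [y] lying
   below [x_(k+1)] in all scalarizations. Taking [y] among later iterates makes the
   sequence Cauchy; its limit lies below every iterate, and any point K-below the
   limit is then a limit of the sequence too, which yields efficiency. *)

Section InnerProduct.
Variables (R : realType) (k : nat).
Implicit Types (u v w : 'rV[R]_k).

Lemma dotvC u v : dotv u v = dotv v u.
Proof. by apply: eq_bigr => i _; rewrite mulrC. Qed.

Lemma dotvDr u v w : dotv u (v + w) = dotv u v + dotv u w.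
Proof. by rewrite /dotv -big_split; apply: eq_bigr => i _; rewrite !mxE mulrDr. Qed.

Lemma dotvDl u v w : dotv (v + w) u = dotv v u + dotv w u.
Proof. by rewrite dotvC dotvDr !(dotvC u). Qed.

Lemma dotvZr a u v : dotv u (a *: v) = a * dotv u v.
Proof. by rewrite /dotv mulr_sumr; apply: eq_bigr => i _; rewrite !mxE mulrCA. Qed.

Lemma dotvZl a u v : dotv (a *: v) u = a * dotv v u.
Proof. by rewrite dotvC dotvZr dotvC. Qed.

Lemma dotvNr u v : dotv u (- v) = - dotv u v.
Proof. by rewrite -scaleN1r dotvZr mulN1r. Qed.

Lemma dotvNl u v : dotv (- v) u = - dotv v u.
Proof. by rewrite dotvC dotvNr dotvC. Qed.

Lemma dotvBr u v w : dotv u (v - w) = dotv u v - dotv u w.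
Proof. by rewrite dotvDr dotvNr. Qed.

Lemma dotvBl u v w : dotv (v - w) u = dotv v u - dotv w u.
Proof. by rewrite dotvDl dotvNl. Qed.

Lemma dotv0r u : dotv u 0 = 0.
Proof. by rewrite /dotv big1 // => i _; rewrite mxE mulr0. Qed.

Lemma dotv0l u : dotv 0 u = 0.
Proof. by rewrite dotvC dotv0r. Qed.

Lemma dotvNN u : dotv (- u) (- u) = dotv u u.
Proof. by rewrite dotvNl dotvNr opprK. Qed.

Lemma dotv_expand u v t :
  dotv (u + t *: v) (u + t *: v) = dotv u u + 2 * t * dotv u v + t ^+ 2 * dotv v v.
Proof. by rewrite !dotvDl !dotvDr !dotvZl !dotvZr (dotvC v u); ring. Qed.

Lemma dotv_ge0 u : 0 <= dotv u u.
Proof. by rewrite sumr_ge0 // => i _; rewrite -expr2 sqr_ge0. Qed.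

Lemma dotv_eq0 u : dotv u u = 0 -> u = 0.
Proof.
move=> u0; apply/rowP => i; rewrite mxE.
have sq0 j : true -> 0 <= u ord0 j * u ord0 j by rewrite -expr2 sqr_ge0.
by move: (psumr_eq0P sq0 u0 (i := i) isT) => /eqP; rewrite mulf_eq0 orbb => /eqP.
Qed.

Lemma enorm_sq u : enorm u ^+ 2 = dotv u u.
Proof. by rewrite sqr_sqrtr // dotv_ge0. Qed.

Lemma enorm_ge0 u : 0 <= enorm u.
Proof. exact: sqrtr_ge0. Qed.

Lemma enorm0 : enorm (0 : 'rV[R]_k) = 0.
Proof. by rewrite /enorm dotv0r sqrtr0. Qed.

Lemma cauchy_schwarz u v : dotv u v <= enorm u * enorm v.
Proof.
have uv_ge0 := dotv_ge0 (enorm v *: u - enorm u *: v).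
rewrite dotvBl !dotvBr !dotvZl !dotvZr -!enorm_sq (dotvC v u) in uv_ge0.
have [/eqP|uv_neq0] := eqVneq (enorm u * enorm v) 0.
  rewrite mulf_eq0 => /orP[] /eqP e0.
  - have -> : u = 0 by apply: dotv_eq0; rewrite -enorm_sq e0 expr0n.
    by rewrite dotv0l enorm0 mul0r.
  - have -> : v = 0 by apply: dotv_eq0; rewrite -enorm_sq e0 expr0n.
    by rewrite dotv0r enorm0 mulr0.
have : 0 < enorm u * enorm v by rewrite lt0r uv_neq0 mulr_ge0 ?enorm_ge0.
nra.
Qed.

Lemma ler_enormD u v : enorm (u + v) <= enorm u + enorm v.
Proof.
rewrite -(@ler_pXn2r _ 2) // ?nnegrE ?addr_ge0 ?enorm_ge0 //.
rewrite enorm_sq dotvDl !dotvDr -!enorm_sq (dotvC v u).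
have := cauchy_schwarz u v; nra.
Qed.

(* [Num.sqrt] vanishes on negative numbers, so no sign condition on [s] is needed. *)
Lemma ler_enorm_sqrt u v s :
  dotv u u <= s * dotv v v -> enorm u <= Num.sqrt s * enorm v.
Proof.
move=> uv; apply: le_trans (ler_wsqrtr uv) _.
have [s_ge0|s_lt0] := leP 0 s; first by rewrite sqrtrM.
have : s * dotv v v <= 0 by apply: mulr_le0_ge0; [exact: ltW | exact: dotv_ge0].
by rewrite -sqrtr_eq0 => /eqP ->; rewrite mulr_ge0 ?sqrtr_ge0 ?enorm_ge0.
Qed.

Definition norm1 u := \sum_i `|u ord0 i|.

Lemma norm1_ge0 u : 0 <= norm1 u.
Proof. exact: sumr_ge0. Qed.

Lemma norm1_eq0 u : norm1 u = 0 -> u = 0.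
Proof.
move=> u0; apply/rowP => i; rewrite mxE.
have := psumr_eq0P (fun j _ => normr_ge0 (u ord0 j)) u0 (i := i) isT.
by move/eqP; rewrite normr_eq0 => /eqP.
Qed.

Lemma ler_dotv_norm1 u v : `|dotv u v| <= norm1 u * norm1 v.
Proof.
rewrite (le_trans (ler_norm_sum _ _ _)) // /norm1 mulr_suml.
apply: ler_sum => i _; rewrite normrM ler_wpM2l //.
by rewrite /norm1 (bigD1 i) //= lerDl sumr_ge0.
Qed.

Lemma ler_norm1_norm u : norm1 u <= k%:R * `|u|.
Proof.
rewrite /norm1 (@le_trans _ _ (\sum_(i < k) `|u|)) //; last first.
  by rewrite sumr_const card_ord mulr_natl.
apply: ler_sum => i _; rewrite [leRHS]/Num.Def.normr /= mx_normrE.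
by apply/bigmax_geP; right; exists (ord0, i).
Qed.

Lemma ler_norm_enorm u : `|u| <= enorm u.
Proof.
rewrite [leLHS]/Num.Def.normr /= mx_normrE; apply: bigmax_le; first exact: enorm_ge0.
move=> [i j] _ /=; rewrite (_ : i = ord0); last by apply: val_inj; case: i => -[].
rewrite -sqrtr_sqr ler_wsqrtr // /dotv (bigD1 j) //= -expr2 lerDl.
by rewrite sumr_ge0 // => l _; rewrite -expr2 sqr_ge0.
Qed.

Lemma dotv_continuous u : continuous (dotv u).
Proof.
move=> v; apply/(@cvgrPdist_lt _ _ _ _ (@nbhs_filter _ v)) => e e_gt0.
set B := (norm1 u + 1) * (k%:R + 1).
have B_gt0 : 0 < B by rewrite mulr_gt0 // ltr_pwDr // ?norm1_ge0 // ler0n.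
near=> w.
have : ball v (e / B) w by near: w; apply: nbhsx_ballx; rewrite divr_gt0.
rewrite -ball_normE /ball_ /= ltr_pdivlMr // => vw.
rewrite -dotvBr (le_lt_trans (ler_dotv_norm1 _ _)) //.
apply: le_lt_trans (ler_wpM2l (norm1_ge0 u) (ler_norm1_norm (v - w))) _.
have := normr_ge0 (v - w); have := norm1_ge0 u; rewrite /B in vw; nra.
Unshelve. all: by end_near.
Qed.

End InnerProduct.

(* If [D < 0], the step [t = -D / (max B 0 - D)] makes the right-hand side negative. *)
Lemma ge0_of_small_steps (R : realType) (D B : R) :
  (forall t, 0 < t <= 1 -> 0 <= t * D + t ^+ 2 * B) -> 0 <= D.
Proof.
move=> small_steps; rewrite leNgt; apply/negP => D_lt0.
pose b : R := Num.max B 0.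
have B_le_b : B <= b by rewrite le_max lexx.
have b_ge0 : 0 <= b by rewrite le_max lexx orbT.
pose u := b - D; have u_gt0 : 0 < u by rewrite /u; lra.
pose t := - D / u.
have tu : t * u = - D by rewrite /t divfK // gt_eqF.
have t_gt0 : 0 < t by rewrite divr_gt0 // oppr_gt0.
have t_le1 : t <= 1 by rewrite ler_pdivrMr // mul1r /u; lra.
have /small_steps step : 0 < t <= 1 by rewrite t_gt0 t_le1.
have : 0 <= t * (D + t * b).
  by have := ler_wpM2l (exprn_ge0 2 (ltW t_gt0)) B_le_b; nra.
rewrite pmulr_rge0 // => /(mulr_ge0 (ltW u_gt0)).
have -> : u * (D + t * b) = u * D + t * u * b by ring.
rewrite tu /u; nra.
Qed.

Lemma argmin_quadratic_growth (R : realType) (k : nat) (g : 'rV[R]_k -> R) a b :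
  (forall a b t, 0 <= t <= 1 -> g (a + t *: b) <= (1 - t) * g a + t * g (a + b)) ->
  (forall v, g a + 2^-1 * dotv a a <= g v + 2^-1 * dotv v v) ->
  g a + 2^-1 * dotv a a + 2^-1 * dotv b b
    <= g (a + b) + 2^-1 * dotv (a + b) (a + b).
Proof.
move=> g_convex a_min.
have := dotv_expand a b 1; rewrite scale1r expr1n mulr1 !mul1r => ->.
suff : 0 <= g (a + b) - g a + dotv a b by lra.
apply: (@ge0_of_small_steps _ _ (2^-1 * dotv b b)) => t /andP[t_gt0 t_le1].
have t01 : 0 <= t <= 1 by rewrite ltW.
have := a_min (a + t *: b); have := g_convex a b t t01; rewrite dotv_expand; nra.
Qed.

Section DualCone.
Variables (R : realType) (m : nat) (K : set 'rV[R]_m).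

Lemma interior_dual_lbound mu : interior K mu ->
  exists2 r : R, 0 < r & forall c, dual_cone K c -> r * norm1 c <= dotv c mu.
Proof.
move=> /nbhs_ballP[e e_gt0 e_ball].
exists (e / 2); first by rewrite divr_gt0.
move=> c Kc.
pose s : 'rV[R]_m := \row_i Num.sg (c ord0 i).
have s_le1 : `|s| <= 1.
  rewrite [leLHS]/Num.Def.normr /= mx_normrE; apply: bigmax_le => // -[i j] _ /=.
  by rewrite mxE normr_sg; case: (_ != 0).
have K_shift : K (mu - (e / 2) *: s).
  apply: e_ball; rewrite -ball_normE /ball_ /= opprB addrC subrK normrZ.
  rewrite gtr0_norm ?divr_gt0 // (le_lt_trans (ler_wpM2l _ s_le1)) ?ltW ?divr_gt0 //.
  by rewrite mulr1 ltr_pdivrMr // ltr_pMr // ltr1n.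
have -> : norm1 c = dotv c s.
  by apply: eq_bigr => i _; rewrite mxE normrEsg mulrC.
by have := Kc _ K_shift; rewrite dotvBr dotvZr subr_ge0.
Qed.

Lemma C_ell_norm1_bounded ell : interior K ell ->
  exists M, forall c, C_ell K ell c -> norm1 c <= M.
Proof.
move=> /interior_dual_lbound[r r_gt0 r_le]; exists r^-1 => c [Kc c_ell].
by rewrite -(ler_pM2l r_gt0) mulrV ?unitfE ?gt_eqF // -c_ell r_le.
Qed.

Lemma dual_cone_dotv_gt0 mu c : interior K mu -> dual_cone K c -> c != 0 ->
  0 < dotv c mu.
Proof.
move=> /interior_dual_lbound[r r_gt0 r_le] Kc c_neq0.
apply: lt_le_trans (r_le c Kc); rewrite mulr_gt0 // lt0r norm1_ge0 andbT.
by apply: contra c_neq0 => /eqP/norm1_eq0 ->.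
Qed.

Lemma C_ell_neq0 ell c : C_ell K ell c -> c != 0.
Proof.
move=> [_ c_ell]; apply/eqP => c0.
by move: c_ell; rewrite c0 dotv0l => /eqP; rewrite eq_sym oner_eq0.
Qed.

Lemma has_ubound_kappa ell mu : interior K mu ->
  has_ubound [set dotv c ell / dotv c mu | c in dual_cone K `\ 0].
Proof.
move=> mu_int; have [r r_gt0 r_le] := interior_dual_lbound mu_int.
exists (norm1 ell / r) => _ [c [Kc /eqP c_neq0] <-].
have cmu_gt0 := dual_cone_dotv_gt0 mu_int Kc c_neq0.
rewrite ler_pdivrMr // -(ler_pM2r r_gt0) mulrAC divfK ?gt_eqF //.
have := le_trans (ler_norm _) (ler_dotv_norm1 c ell).
have := r_le c Kc; have := norm1_ge0 ell; nra.
Qed.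

Lemma invr_dotv_le_kappa ell mu c : interior K mu -> C_ell K ell c ->
  (dotv c mu)^-1 <= kappa K ell mu.
Proof.
move=> mu_int Cc; apply: ub_le_sup; first exact: has_ubound_kappa.
exists c; last by rewrite Cc.2 div1r.
by split; [exact: Cc.1 | apply/eqP; exact: C_ell_neq0 Cc].
Qed.

Lemma kappa_gt0 ell mu c : interior K mu -> C_ell K ell c -> 0 < kappa K ell mu.
Proof.
move=> mu_int Cc; apply: lt_le_trans (invr_dotv_le_kappa mu_int Cc).
by rewrite invr_gt0 (dual_cone_dotv_gt0 mu_int Cc.1 (C_ell_neq0 Cc)).
Qed.

Lemma invr_kappa_le ell mu c : interior K mu -> C_ell K ell c ->
  (kappa K ell mu)^-1 <= dotv c mu.
Proof.
move=> mu_int Cc.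
have cmu_gt0 := dual_cone_dotv_gt0 mu_int Cc.1 (C_ell_neq0 Cc).
rewrite -[leRHS]invrK ler_pV2 ?inE ?unitfE ?gt_eqF ?invr_gt0 ?(kappa_gt0 mu_int Cc) //.
exact: invr_dotv_le_kappa.
Qed.

End DualCone.

Section Subproblem.
Variables (R : realType) (n m : nat) (K : set 'rV[R]_m).
Variables (ell : 'rV[R]_m) (F : 'rV[R]_n -> 'rV[R]_m).

Definition dirmax (xk v : 'rV[R]_n) : R :=
  sup [set dotv c (Jac F xk v) | c in C_ell K ell].

Definition scal_le (y z : 'rV[R]_n) : Prop :=
  forall c, C_ell K ell c -> dotv c (F y) <= dotv c (F z).

Lemma scal_le_refl y : scal_le y y.
Proof. by []. Qed.

Lemma scal_le_trans y z w : scal_le y z -> scal_le z w -> scal_le y w.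
Proof. by move=> yz zw c Cc; exact: le_trans (yz c Cc) (zw c Cc). Qed.

Lemma subprob_objE xk y :
  subprob_obj K ell F xk y = dirmax xk (y - xk) + 2^-1 * dotv (y - xk) (y - xk).
Proof. by rewrite /subprob_obj enorm_sq. Qed.

(* With [C_ell] empty the subproblem is [|x - xk|^2 / 2], minimized only at [xk]. *)
Lemma C_ell_nonempty xk z :
  is_argmin (subprob_obj K ell F xk) z -> z <> xk -> C_ell K ell !=set0.
Proof.
move=> z_min z_neq; apply: contrapT => C_empty; apply: z_neq.
have dirmaxE v : dirmax xk v = 0.
  rewrite /dirmax (_ : [set dotv c (Jac F xk v) | c in C_ell K ell] = set0) ?sup0 //.
  by apply/seteqP; split => // y [c Cc _]; apply: C_empty; exists c.
have := z_min xk; rewrite !subprob_objE !dirmaxE subrr dotv0r mulr0 !add0r => z_le.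
have z_eq0 : dotv (z - xk) (z - xk) = 0 by have := dotv_ge0 (z - xk); lra.
by apply/eqP; rewrite -subr_eq0; apply/eqP/dotv_eq0.
Qed.

Variable M : R.
Hypothesis C_ell_bounded : forall c, C_ell K ell c -> norm1 c <= M.
Hypothesis C_ell_n0 : C_ell K ell !=set0.

Lemma dirmax_ub xk v c : C_ell K ell c -> dotv c (Jac F xk v) <= dirmax xk v.
Proof.
move=> Cc; apply: ub_le_sup; last by exists c.
exists (M * norm1 (Jac F xk v)) => _ [c' Cc' <-].
apply: le_trans (ler_norm _) _; apply: le_trans (ler_dotv_norm1 _ _) _.
by rewrite ler_wpM2r ?norm1_ge0 ?C_ell_bounded.
Qed.

Lemma dirmax_lub xk v b :
  (forall c, C_ell K ell c -> dotv c (Jac F xk v) <= b) -> dirmax xk v <= b.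
Proof.
move=> le_b; have [c0 Cc0] := C_ell_n0.
apply: ge_sup; first by exists (dotv c0 (Jac F xk v)), c0.
by move=> _ [c Cc <-]; exact: le_b.
Qed.

Lemma dirmax0 xk : dirmax xk 0 = 0.
Proof.
have [c0 Cc0] := C_ell_n0.
apply/eqP; rewrite eq_le; apply/andP; split.
  by apply: dirmax_lub => c _; rewrite /Jac linear0 dotv0r.
by have := dirmax_ub xk 0 Cc0; rewrite /Jac linear0 dotv0r.
Qed.

Lemma dirmax_convex xk a b t : 0 <= t <= 1 ->
  dirmax xk (a + t *: b) <= (1 - t) * dirmax xk a + t * dirmax xk (a + b).
Proof.
move=> /andP[t_ge0 t_le1]; apply: dirmax_lub => c Cc.
have := dirmax_ub xk a Cc; have := dirmax_ub xk (a + b) Cc.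
rewrite /Jac !linearD linearZ !dotvDr dotvZr; nra.
Qed.

Lemma subprob_growth xk z y : is_argmin (subprob_obj K ell F xk) z ->
  subprob_obj K ell F xk z + 2^-1 * dotv (y - z) (y - z) <= subprob_obj K ell F xk y.
Proof.
move=> z_min; rewrite !subprob_objE.
have -> : y - xk = (z - xk) + (y - z) by rewrite [RHS]addrC addrA subrK.
apply: argmin_quadratic_growth; first exact: dirmax_convex.
by move=> v; have := z_min (v + xk); rewrite !subprob_objE addrK.
Qed.

Hypothesis F_smooth : K_smooth K F ell.

Lemma argmin_scal_le xk z : is_argmin (subprob_obj K ell F xk) z -> scal_le z xk.
Proof.
move=> z_min c [Kc c_ell].
have := Kc _ (F_smooth xk z); rewrite /coneLe !dotvBr dotvDr dotvZr c_ell mulr1 enorm_sq.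
have := z_min xk; rewrite !subprob_objE subrr dirmax0 dotv0r mulr0 addr0.
have := dirmax_ub xk (z - xk) (conj Kc c_ell); lra.
Qed.

Variables (mu : 'rV[R]_m) (kap : R).
Hypothesis F_strongly_convex : strongly_K_convex K F mu.
Hypothesis kap_le : forall c, C_ell K ell c -> kap^-1 <= dotv c mu.

(* Strong convexity bounds the scalarized model at [y] by the subproblem value at [z]
   minus [|y - xk|^2 / (2 kap)]; quadratic growth of the subproblem then yields the rate. *)
Lemma argmin_contract xk z y : is_argmin (subprob_obj K ell F xk) z -> scal_le y z ->
  dotv (z - y) (z - y) <= (1 - kap^-1) * dotv (xk - y) (xk - y).
Proof.
move=> z_min y_le.
have model_y : dirmax xk (y - xk)
    <= subprob_obj K ell F xk z - 2^-1 * (kap^-1 * dotv (y - xk) (y - xk)).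
  apply: dirmax_lub => c Cc; have [Kc c_ell] := Cc.
  have convex_y := Kc _ (F_strongly_convex xk y); have smooth_z := Kc _ (F_smooth xk z).
  rewrite /coneLe !dotvBr !dotvDr !dotvZr c_ell mulr1 !enorm_sq in convex_y smooth_z.
  have := kap_le Cc; have := y_le c Cc; have := dirmax_ub xk (z - xk) Cc.
  have := dotv_ge0 (y - xk); rewrite subprob_objE; nra.
have := subprob_growth y z_min; rewrite (subprob_objE xk y).
rewrite -(opprB y z) -(opprB y xk) !dotvNN.
have := dotv_ge0 (y - xk); lra.
Qed.

End Subproblem.

Lemma closed_scal_le (R : realType) (n m : nat) (K : set 'rV[R]_m)
    (ell : 'rV[R]_m) (F : 'rV[R]_n -> 'rV[R]_m) (z : 'rV[R]_n) :
  (forall y, differentiable F y) -> closed [set y | scal_le K ell F y z].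
Proof.
move=> F_diff.
have -> : [set y | scal_le K ell F y z] =
    \bigcap_(c in C_ell K ell) ((dotv c \o F) @^-1` [set t | t <= dotv c (F z)]).
  by apply/seteqP; split => y y_le c Cc; exact: y_le.
apply: closed_bigI => c _; apply: (proj1 (continuous_closedP _)); last exact: closed_le.
move=> y; apply: continuous_comp; first exact: differentiable_continuous.
exact: dotv_continuous.
Qed.

Lemma coneLe_scal_le (R : realType) (n m : nat) (K : set 'rV[R]_m)
    (ell : 'rV[R]_m) (F : 'rV[R]_n -> 'rV[R]_m) (y z : 'rV[R]_n) :
  coneLe K (F y) (F z) -> scal_le K ell F y z.
Proof. by move=> yz c [Kc _]; have := Kc _ yz; rewrite dotvBr subr_ge0. Qed.

Lemma geometric_eventually_lt (R : realType) (q D eps : R) :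
  0 <= q < 1 -> 0 <= D -> 0 < eps ->
  exists N, forall k, (N <= k)%N -> q ^+ k * D < eps.
Proof.
move=> /andP[q_ge0 q_lt1] D_ge0 eps_gt0.
have /cvg_expr : `|q| < 1 by rewrite ger0_norm.
move=> /cvgrPdist_lt/(_ (eps / (D + 1))).
rewrite divr_gt0 ?ltr_pwDr // => /(_ isT)[N _ qN]; exists N => k Nk.
have := qN k Nk; rewrite /= sub0r normrN ger0_norm ?exprn_ge0 //.
rewrite ltr_pdivlMr ?ltr_pwDr //; have := exprn_ge0 k q_ge0; nra.
Qed.

Section ContractionTowardLowerPoints.
Variables (R : realType) (n : nat) (below : 'rV[R]_n -> 'rV[R]_n -> Prop).
Variables (x : nat -> 'rV[R]_n) (q : R).
Hypothesis below_refl : forall y, below y y.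
Hypothesis below_trans : forall y z w, below y z -> below z w -> below y w.
Hypothesis closed_below : forall z, closed [set y | below y z].
Hypothesis x_descent : forall k, below (x k.+1) (x k).
Hypothesis x_contract :
  forall k y, below y (x k.+1) -> enorm (x k.+1 - y) <= q * enorm (x k - y).
Hypothesis q01 : 0 <= q < 1.

Lemma below_iter i j : (i <= j)%N -> below (x j) (x i).
Proof.
move=> /subnKC <-; elim: (j - i)%N => [|d IH]; first by rewrite addn0.
by rewrite addnS; apply: below_trans IH.
Qed.

Lemma enorm_iter_geometric y j : (forall i, (i <= j)%N -> below y (x i)) ->
  forall k, (k <= j)%N -> enorm (x k - y) <= q ^+ k * enorm (x 0 - y).
Proof.
move=> y_below; elim=> [|k IH] kj; first by rewrite expr0 mul1r.
apply: le_trans (x_contract (y_below _ kj)) _.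
by rewrite exprS -mulrA ler_wpM2l ?(andP q01).1 // IH // ltnW.
Qed.

Lemma enorm_iter_bounded j : enorm (x 0 - x j) <= enorm (x 0 - x 1) / (1 - q).
Proof.
have [q_ge0 q_lt1] := andP q01.
case: j => [|j]; first by rewrite subrr enorm0 divr_ge0 ?enorm_ge0 ?subr_ge0 ?ltW.
have := enorm_iter_geometric (fun i ij => below_iter ij) (ltn0Sn j).
rewrite expr1 => x1j.
have := ler_enormD (x 0 - x 1) (x 1 - x j.+1); rewrite addrA subrK => x0j.
rewrite ler_pdivlMr ?subr_gt0 //.
have := enorm_ge0 (x 1 - x j.+1); nra.
Qed.

Lemma enorm_iter_cauchy k j : (k <= j)%N ->
  enorm (x k - x j) <= q ^+ k * (enorm (x 0 - x 1) / (1 - q)).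
Proof.
move=> kj; apply: le_trans (enorm_iter_geometric (fun i ij => below_iter ij) kj) _.
by rewrite ler_wpM2l ?exprn_ge0 ?(andP q01).1 ?enorm_iter_bounded.
Qed.

Lemma cvg_iter : cvg (x @ \oo).
Proof.
have D_ge0 : 0 <= enorm (x 0 - x 1) / (1 - q).
  by rewrite divr_ge0 ?enorm_ge0 // subr_ge0 ltW // (andP q01).2.
apply/cauchy_cvgP/cauchy_exP => eps eps_gt0.
have [N qN] := geometric_eventually_lt q01 D_ge0 eps_gt0.
exists (x N), N => // k /= Nk; rewrite -ball_normE /ball_ /=.
apply: le_lt_trans (ler_norm_enorm _) _; apply: le_lt_trans (enorm_iter_cauchy Nk) _.
exact: qN.
Qed.

Lemma cvg_iter_lower y : (forall i, below y (x i)) -> x @ \oo --> y.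
Proof.
move=> y_below; apply/cvgrPdist_lt => eps eps_gt0.
have [N qN] := geometric_eventually_lt q01 (enorm_ge0 (x 0 - y)) eps_gt0.
exists N => // k /= Nk; rewrite distrC; apply: le_lt_trans (ler_norm_enorm _) _.
apply: le_lt_trans (enorm_iter_geometric (fun i _ => y_below i) (leqnn k)) _.
exact: qN.
Qed.

Lemma lim_iter_below i : below (lim (x @ \oo)) (x i).
Proof.
apply: (closed_cvg _ (@closed_below (x i)) _ _ cvg_iter).
by exists i => // k /= ik; exact: below_iter.
Qed.

Lemma below_lim_iter y : below y (lim (x @ \oo)) -> y = lim (x @ \oo).
Proof.
move=> y_below; apply: (cvg_unique _ _ cvg_iter) => //.
by apply: cvg_iter_lower => i; apply: below_trans y_below (lim_iter_below i).
Qed.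

Lemma contraction_lower_limit : exists xs, [/\ x @ \oo --> xs,
  forall k, below xs (x k) & forall y, below y xs -> y = xs].
Proof.
exists (lim (x @ \oo)); split; [exact: cvg_iter | exact: lim_iter_below |].
exact: below_lim_iter.
Qed.

End ContractionTowardLowerPoints.

Theorem lemma4p3 (R : realType) (n m : nat) (K : set 'rV[R]_m)
  (F : 'rV[R]_n -> 'rV[R]_m) (ell mu : 'rV[R]_m) (x : nat -> 'rV[R]_n) :
  closed K -> is_convex_set K -> is_cone K -> is_pointed K ->
  (interior K !=set0) ->
  (forall z, differentiable F z) ->
  interior K ell -> K_smooth K F ell ->
  interior K mu -> strongly_K_convex K F mu ->
  (forall k, is_argmin (subprob_obj K ell F (x k)) (x k.+1)) ->
  (forall k, x k.+1 <> x k) ->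
  exists xs : 'rV[R]_n,
    x @ \oo --> xs /\ efficient K F xs /\
    forall k, enorm (x k.+1 - xs)
              <= Num.sqrt (1 - (kappa K ell mu)^-1) * enorm (x k - xs).
Proof.
move=> _ _ _ _ _ F_diff ell_int F_smooth mu_int F_convex x_argmin x_move.
have C_n0 := C_ell_nonempty (x_argmin 0%N) (x_move 0%N).
have [c0 Cc0] := C_n0.
have [M C_bounded] := C_ell_norm1_bounded ell_int.
have kappa_pos := kappa_gt0 mu_int Cc0.
have kappa_le c : C_ell K ell c -> (kappa K ell mu)^-1 <= dotv c mu.
  exact: invr_kappa_le.
set q := Num.sqrt (1 - (kappa K ell mu)^-1).
have q01 : 0 <= q < 1.
  by rewrite sqrtr_ge0 -sqrtr1 ltr_sqrt // ltrBlDr ltrDl invr_gt0.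
have x_descent k : scal_le K ell F (x k.+1) (x k).
  exact: (argmin_scal_le C_bounded C_n0 F_smooth (x_argmin k)).
have x_contract k y : scal_le K ell F y (x k.+1) ->
    enorm (x k.+1 - y) <= q * enorm (x k - y).
  move=> y_le; apply: ler_enorm_sqrt.
  exact: (argmin_contract C_bounded C_n0 F_smooth F_convex kappa_le (x_argmin k) y_le).
have closed_le z := @closed_scal_le _ _ _ K ell F z F_diff.
have [xs [x_cvg xs_below xs_min]] := contraction_lower_limit
  (@scal_le_refl _ _ _ K ell F) (@scal_le_trans _ _ _ K ell F) closed_le
  x_descent x_contract q01.
exists xs; split=> //; split; last by move=> k; apply: x_contract.
move=> [y [Fy_le Fy_neq]]; apply: Fy_neq; congr F.
exact/xs_min/coneLe_scal_le.
Qed.
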